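(* Let $\mathcal{C}$ be a PL-cograph on a point set $\mathcal{P}$ that takes at least two distinct values, and let $X\neq Y$ be points of $\mathcal{P}$. Let $O$ be a point such that $e=\mathcal{C}(X,Y)$, $f=\mathcal{C}(O,X)$ and $g=\mathcal{C}(O,Y)$ are pairwise distinct (such a point exists). For each point $P\notin\{X,Y\}$ define its label $\lambda(P)$ to be the ordered pair $(\mathcal{C}(P,X),\mathcal{C}(P,Y))$ if $\mathcal{C}(P,X)\neq\mathcal{C}(P,Y)$, and the single edge $\mathcal{C}(P,O)$ if $\mathcal{C}(P,X)=\mathcal{C}(P,Y)$ (labels of the two kinds being regarded as different). Then distinct points $P\neq Q$ in $\mathcal{P}\setminus\{X,Y\}$ have distinct labels, i.e. each such point is uniquely determined by its label.
   Context: A cograph is a function $\mathcal{C}$ assigning to each unordered pair $\{P,Q\}$ of distinct elements of a set $\mathcal{P}$ (points) a value $\mathcal{C}(P,Q)$ (an edge). A PL-cograph is a cograph satisfying: (1) for distinct points $P,Q,R$, if $\mathcal{C}(P,Q)=\mathcal{C}(Q,R)$ then $\mathcal{C}(P,Q)=\mathcal{C}(P,R)$; (2) for distinct points $P,Q,R,S$, if $\mathcal{C}(P,Q)=\mathcal{C}(R,S)$ then $\mathcal{C}(P,Q)=\mathcal{C}(P,R)=\mathcal{C}(P,S)=\mathcal{C}(Q,R)=\mathcal{C}(Q,S)$. *)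

From mathcomp Require Import all_boot.
Set Implicit Arguments. Unset Strict Implicit. Unset Printing Implicit Defensive.

(* A cograph on the point type P with edge values in E is modelled as a
   function C : P -> P -> E which is symmetric on distinct points; only its
   values on pairs of distinct points are meaningful (an unordered pair
   {p,q} with p <> q gets the value C p q = C q p). *)
Definition cograph {P : Type} {E : Type} (C : P -> P -> E) : Prop :=
  forall p q : P, p <> q -> C p q = C q p.

Definition PL_axiom1 {P E : Type} (C : P -> P -> E) : Prop :=
  forall p q r : P, p <> q -> p <> r -> q <> r ->
    C p q = C q r -> C p q = C p r.

Definition PL_axiom2 {P E : Type} (C : P -> P -> E) : Prop :=
  forall p q r s : P,
    p <> q -> p <> r -> p <> s -> q <> r -> q <> s -> r <> s ->
    C p q = C r s ->
    [/\ C p q = C p r, C p q = C p s, C p q = C q r & C p q = C q s].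

Definition PL_cograph {P E : Type} (C : P -> P -> E) : Prop :=
  [/\ cograph C, PL_axiom1 C & PL_axiom2 C].

Definition two_values {P E : Type} (C : P -> P -> E) : Prop :=
  exists a b c d : P, a <> b /\ c <> d /\ C a b <> C c d.

Definition label {P : Type} {E : eqType} (C : P -> P -> E) (X Y O p : P)
  : (E * E) + E :=
  if C p X != C p Y then inl (C p X, C p Y) else inr (C p O).

(* Two points P, Q with the same pair label see X along one edge, which by
   axiom (1) in the triangle P Q X is C(P,Q); the same holds for Y, forcing
   C(P,X) = C(P,Y), contrary to P having a pair label.  Call P balanced if
   C(P,X) = C(P,Y), i.e. if its label is a single edge.  A balanced point is
   joined to both X and Y by e = C(X,Y) (axiom (1) in the triangle X Y P), so
   for two of them the disjoint edges PX and QY both carry e and axiom (2)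
   gives C(P,Q) = e.  Equal single labels C(P,O) = C(Q,O) then give
   C(P,O) = C(P,Q) = e by axiom (1), and axiom (2) applied to the disjoint
   edges XY and PO yields f = C(X,O) = e, a contradiction. *)
From mathcomp Require Import all_boot.

Set Implicit Arguments.
Unset Strict Implicit.
Unset Printing Implicit Defensive.

Section PLCograph.

Variables (P E : Type) (C : P -> P -> E).
Hypotheses (C_sym : cograph C) (C_ax1 : PL_axiom1 C) (C_ax2 : PL_axiom2 C).

Lemma PL_isosceles p q r : p <> q -> p <> r -> q <> r ->
  C p r = C q r -> C p q = C p r.
Proof.
move=> pq pr qr eq_r; have rq := not_eq_sym qr.
by symmetry; apply: C_ax1; rewrite // [C r q]C_sym.
Qed.

Lemma PL_balanced_edge p X Y : p <> X -> p <> Y -> X <> Y ->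
  C p X = C p Y -> C p X = C X Y.
Proof.
move=> pX pY XY bal_p; have [Xp Yp] := (not_eq_sym pX, not_eq_sym pY).
by rewrite C_sym // (PL_isosceles XY Xp Yp) // (C_sym Xp) (C_sym Yp).
Qed.

Lemma PL_twins_balanced p q X Y : p <> X -> p <> Y -> q <> X -> q <> Y ->
  p <> q -> C p X = C q X -> C p Y = C q Y -> C p X = C p Y.
Proof.
move=> pX pY qX qY pq eqX eqY.
by rewrite -(PL_isosceles pq pX qX eqX) (PL_isosceles pq pY qY eqY).
Qed.

Lemma PL_balanced_pair_edge p q X Y : X <> Y -> p <> X -> p <> Y ->
  q <> X -> q <> Y -> p <> q ->
  C p X = C p Y -> C q X = C q Y -> C p q = C X Y.
Proof.
move=> XY pX pY qX qY pq bal_p bal_q.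
have pXe := PL_balanced_edge pX pY XY bal_p.
have qYe : C p X = C q Y by rewrite -bal_q pXe (PL_balanced_edge qX qY XY bal_q).
have [pXq _ _ _] := C_ax2 pX pq pY (not_eq_sym qX) XY qY qYe.
by rewrite -pXe -pXq.
Qed.

Lemma PL_balanced_labels_edge p q X Y O : X <> Y -> O <> X -> O <> Y ->
  p <> X -> p <> Y -> q <> X -> q <> Y -> p <> q -> p <> O -> q <> O ->
  C p X = C p Y -> C q X = C q Y -> C p O = C q O -> C X O = C X Y.
Proof.
move=> XY OX OY pX pY qX qY pq pO qO bal_p bal_q eqO.
have pOe : C X Y = C p O.
  rewrite -(PL_balanced_pair_edge XY pX pY qX qY pq) //.
  exact: PL_isosceles.
have nsym := @not_eq_sym P.
by have [] := C_ax2 XY (nsym _ _ pX) (nsym _ _ OX) (nsym _ _ pY) (nsym _ _ OY) pO pOe.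
Qed.

End PLCograph.

Theorem theorem5p1 (P : Type) (E : eqType) (C : P -> P -> E)
  (HC : PL_cograph C) (H2 : two_values C)
  (X Y O : P) (HXY : X <> Y) (HOX : O <> X) (HOY : O <> Y)
  (Hef : C X Y <> C O X) (Heg : C X Y <> C O Y) (Hfg : C O X <> C O Y) :
  forall p q : P, p <> X -> p <> Y -> q <> X -> q <> Y -> p <> q ->
    label C X Y O p <> label C X Y O q.
Proof.
case: HC => C_sym C_ax1 C_ax2 p q pX pY qX qY pq.
rewrite /label; case: eqP => [bal_p|unbal_p]; case: eqP => [bal_q|unbal_q] //.
- move=> [eqO]; apply: Hef.
  have pO : p <> O by move=> eq_pO; apply: Hfg; rewrite -eq_pO.
  have qO : q <> O by move=> eq_qO; apply: Hfg; rewrite -eq_qO.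
  rewrite (C_sym O X HOX); symmetry.
  exact: (PL_balanced_labels_edge C_sym C_ax1 C_ax2 HXY HOX HOY pX pY qX qY pq).
- move=> [eqX eqY]; apply: unbal_p.
  exact: (PL_twins_balanced C_sym C_ax1 pX pY qX qY pq).
Qed.
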